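(* Let $P_0,P_1,Q_2\in\mathbb H$ be pairwise distinct with $\langle P_0,P_1\rangle=\langle P_0,Q_2\rangle=\langle P_1,Q_2\rangle$, and let $R_2=\frac{P_0+P_1+Q_2}{\sqrt{-\langle P_0+P_1+Q_2,P_0+P_1+Q_2\rangle}}\in\mathbb H$ be its centroid. Then there is $\varepsilon_2\in\{-1,1\}$ such that $$R_2=\frac{\sqrt{1-2\langle P_0,P_1\rangle}\,(P_0+P_1)+\varepsilon_2\,P_0\tilde\times P_1}{\sqrt3\,\bigl(1-\langle P_0,P_1\rangle\bigr)}.$$
   Context: $\langle v,w\rangle=-v_1w_1+v_2w_2+v_3w_3$ on $\mathbb R^3$; $\mathbb H=\{P\in\mathbb R^3:\langle P,P\rangle=-1,\ P_1\ge1\}$; $v\tilde\times w:=J(v\times w)$ with $J=\mathrm{diag}(-1,1,1)$ and $\times$ the Euclidean cross product. *)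

From Stdlib Require Import Reals.
Open Scope R_scope.

Record vec3 := V3 { x1 : R; x2 : R; x3 : R }.

Definition lor (v w : vec3) : R := - x1 v * x1 w + x2 v * x2 w + x3 v * x3 w.

Definition inH (P : vec3) : Prop := lor P P = -1 /\ 1 <= x1 P.

Definition vadd (v w : vec3) : vec3 := V3 (x1 v + x1 w) (x2 v + x2 w) (x3 v + x3 w).
Definition vscale (a : R) (v : vec3) : vec3 := V3 (a * x1 v) (a * x2 v) (a * x3 v).

Definition cross (v w : vec3) : vec3 :=
  V3 (x2 v * x3 w - x3 v * x2 w)
     (x3 v * x1 w - x1 v * x3 w)
     (x1 v * x2 w - x2 v * x1 w).

Definition Jmap (v : vec3) : vec3 := V3 (- x1 v) (x2 v) (x3 v).

Definition lcross (v w : vec3) : vec3 := Jmap (cross v w).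

(* Let a be the common value of <P0,P1>, <P0,Q2>, <P1,Q2>; a < -1 by the
   reverse Cauchy-Schwarz inequality on H, and <S,S> = -3(1-2a) for
   S = P0+P1+Q2.  With s = sqrt(1-2a), the claim amounts to
   u := (1-a) Q2 + a (P0+P1) = eps s (P0 ~x P1).  Both u and P0 ~x P1 are
   Lorentz-orthogonal to P0 and P1, so u = lam (P0 ~x P1); comparing norms,
   (1-2a)(a^2-1) = lam^2 (a^2-1), hence lam = +-s. *)

From Stdlib Require Import Reals Lra.
Open Scope R_scope.

Lemma vec3_eq (v w : vec3) :
  x1 v = x1 w -> x2 v = x2 w -> x3 v = x3 w -> v = w.
Proof. destruct v, w; simpl; intros -> -> ->; reflexivity. Qed.

Lemma inH_lor_lt (P Q : vec3) : inH P -> inH Q -> P <> Q -> lor P Q < -1.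
Proof.
  destruct P as [t x y], Q as [t' x' y']; unfold inH, lor; simpl.
  intros [hP ht] [hQ ht'] hne.
  assert (sq : t*t - 1 = x*x + y*y) by lra.
  assert (sq' : t'*t' - 1 = x'*x' + y'*y') by lra.
  assert (lagrange : (t*t' - 1)^2 - (x*x' + y*y')^2 = (t - t')^2 + (x*y' - y*x')^2).
  { transitivity ((t*t - 1)*(t'*t' - 1) + (t - t')^2 - (x*x' + y*y')^2); [ring|].
    rewrite sq, sq'; ring. }
  apply Rnot_le_lt; intro hge.
  assert (tt' : 1 <= t*t') by nra.
  assert (hsq : (t*t' - 1)^2 <= (x*x' + y*y')^2) by nra.
  assert (dt : (t - t')^2 = 0)
    by (pose proof (pow2_ge_0 (t - t')); pose proof (pow2_ge_0 (x*y' - y*x')); lra).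
  replace t' with t in * by nra.
  assert (hsp : (x - x')^2 + (y - y')^2 <= 0) by nra.
  pose proof (pow2_ge_0 (x - x')); pose proof (pow2_ge_0 (y - y')).
  apply hne; f_equal; nra.
Qed.

Lemma lor_lcross_lcross (v w : vec3) :
  lor (lcross v w) (lcross v w) = lor v w ^ 2 - lor v v * lor w w.
Proof. unfold lor, lcross, Jmap, cross; simpl; ring. Qed.

(* [expand] is the Lorentzian BAC-CAB rule applied to N ~x (u ~x N), where
   u ~x N = <u,v> w - <u,w> v. *)
Lemma lcross_perp_parallel (u v w : vec3) :
  lor u v = 0 -> lor u w = 0 ->
  vscale (lor (lcross v w) (lcross v w)) u = vscale (lor u (lcross v w)) (lcross v w).
Proof.
  intros huv huw; set (N := lcross v w).
  assert (expand : vscale (lor N N) u =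
    vadd (vscale (lor u N) N)
         (vadd (vscale (lor u w) (lcross N v)) (vscale (- lor u v) (lcross N w)))).
  { unfold N; apply vec3_eq; unfold lor, lcross, Jmap, cross; simpl; ring. }
  rewrite expand, huv, huw.
  apply vec3_eq; simpl; ring.
Qed.

Lemma lor_vscale_vscale (c : R) (v : vec3) :
  lor (vscale c v) (vscale c v) = c * c * lor v v.
Proof. unfold lor, vscale; simpl; ring. Qed.

Lemma vscale_div_eq (c d : R) (v w : vec3) :
  c <> 0 -> vscale c v = vscale d w -> vscale (d / c) w = v.
Proof.
  intros hc h; destruct v, w; injection h; intros h3 h2 h1.
  apply vec3_eq; simpl; apply (Rmult_eq_reg_l c); try exact hc;
    [rewrite h1 | rewrite h2 | rewrite h3]; field; exact hc.
Qed.

Definition apex_normal (a : R) (P0 P1 Q : vec3) : vec3 :=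
  vadd (vscale (1 - a) Q) (vscale a (vadd P0 P1)).

Section EquilateralTriple.

Variables (P0 P1 Q : vec3) (a : R).
Hypotheses (n0 : lor P0 P0 = -1) (n1 : lor P1 P1 = -1) (nQ : lor Q Q = -1)
  (e01 : lor P0 P1 = a) (e0Q : lor P0 Q = a) (e1Q : lor P1 Q = a).

Lemma lor_triple_sum :
  lor (vadd (vadd P0 P1) Q) (vadd (vadd P0 P1) Q) = -3 * (1 - 2 * a).
Proof.
  transitivity (lor P0 P0 + lor P1 P1 + lor Q Q + 2 * (lor P0 P1 + lor P0 Q + lor P1 Q)).
  - unfold lor; simpl; ring.
  - rewrite n0, n1, nQ, e01, e0Q, e1Q; ring.
Qed.

Lemma lor_apex_normal_l : lor (apex_normal a P0 P1 Q) P0 = 0.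
Proof.
  transitivity ((1 - a) * lor P0 Q + a * (lor P0 P0 + lor P0 P1)).
  - unfold apex_normal, lor; simpl; ring.
  - rewrite n0, e01, e0Q; ring.
Qed.

Lemma lor_apex_normal_r : lor (apex_normal a P0 P1 Q) P1 = 0.
Proof.
  transitivity ((1 - a) * lor P1 Q + a * (lor P0 P1 + lor P1 P1)).
  - unfold apex_normal, lor; simpl; ring.
  - rewrite n1, e01, e1Q; ring.
Qed.

Lemma lor_apex_normal_self :
  lor (apex_normal a P0 P1 Q) (apex_normal a P0 P1 Q) = (1 - 2 * a) * (a * a - 1).
Proof.
  transitivity ((1 - a) * (1 - a) * lor Q Q + 2 * a * (1 - a) * (lor P0 Q + lor P1 Q)
                + a * a * (lor P0 P0 + 2 * lor P0 P1 + lor P1 P1)).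
  - unfold apex_normal, lor; simpl; ring.
  - rewrite n0, n1, nQ, e01, e0Q, e1Q; ring.
Qed.

Lemma apex_normal_parallel :
  a * a <> 1 ->
  exists lam, lam * lam = 1 - 2 * a /\ vscale lam (lcross P0 P1) = apex_normal a P0 P1 Q.
Proof.
  intros ha.
  pose proof (lcross_perp_parallel _ P0 P1 lor_apex_normal_l lor_apex_normal_r) as hpar.
  set (N := lcross P0 P1) in *; set (u := apex_normal a P0 P1 Q) in *.
  assert (hNN : lor N N = a * a - 1).
  { unfold N; rewrite lor_lcross_lcross, n0, n1, e01; ring. }
  assert (hNN0 : lor N N <> 0) by (rewrite hNN; lra).
  pose proof (vscale_div_eq _ _ _ _ hNN0 hpar) as hu.
  exists (lor u N / lor N N); split; [|exact hu].
  apply (Rmult_eq_reg_r (lor N N)); [|exact hNN0].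
  rewrite <- lor_vscale_vscale, hu; unfold u; rewrite lor_apex_normal_self, hNN; reflexivity.
Qed.

End EquilateralTriple.

Lemma centroid_coord (p q n a s r lam : R) :
  s * s = 1 - 2 * a -> 0 < s -> a < 1 -> r <> 0 -> lam * n = (1 - a) * q + a * p ->
  / (r * s) * (p + q) = / (r * (1 - a)) * (s * p + lam / s * n).
Proof.
  intros hss hs ha hr hn.
  replace (lam / s * n) with (((1 - a) * q + a * p) / s) by (rewrite <- hn; field; lra).
  replace a with ((1 - s * s) / 2) by lra.
  field; repeat split; lra.
Qed.

Lemma centroid_of_apex_normal (P0 P1 Q N : vec3) (a s r lam : R) :
  s * s = 1 - 2 * a -> 0 < s -> a < 1 -> r <> 0 ->
  vscale lam N = apex_normal a P0 P1 Q ->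
  vscale (/ (r * s)) (vadd (vadd P0 P1) Q) =
  vscale (/ (r * (1 - a))) (vadd (vscale s (vadd P0 P1)) (vscale (lam / s) N)).
Proof.
  intros hss hs ha hr hu.
  destruct P0, P1, Q, N; unfold apex_normal, vadd, vscale in *; simpl in *.
  injection hu; intros h3 h2 h1.
  apply vec3_eq; simpl; apply centroid_coord; auto.
Qed.

Theorem lemma2p4 (P0 P1 Q2 : vec3) :
  inH P0 -> inH P1 -> inH Q2 ->
  P0 <> P1 -> P0 <> Q2 -> P1 <> Q2 ->
  lor P0 P1 = lor P0 Q2 -> lor P0 Q2 = lor P1 Q2 ->
  let S := vadd (vadd P0 P1) Q2 in
  let R2 := vscale (/ sqrt (- lor S S)) S in
  exists eps2 : R, (eps2 = 1 \/ eps2 = -1) /\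
    R2 = vscale (/ (sqrt 3 * (1 - lor P0 P1)))
           (vadd (vscale (sqrt (1 - 2 * lor P0 P1)) (vadd P0 P1))
                 (vscale eps2 (lcross P0 P1))).
Proof.
  (* Distinctness of Q2 from P0, P1 is implied by the equal products. *)
  intros hP0 hP1 hQ2 d01 _ _ e0Q e1Q S R2.
  assert (ha : lor P0 P1 < -1) by (apply inH_lor_lt; assumption).
  destruct hP0 as [n0 _], hP1 as [n1 _], hQ2 as [nQ _].
  set (a := lor P0 P1) in *.
  assert (h0Q : lor P0 Q2 = a) by congruence.
  assert (h1Q : lor P1 Q2 = a) by congruence.
  destruct (apex_normal_parallel P0 P1 Q2 a n0 n1 nQ eq_refl h0Q h1Q)
    as [lam [hlam hu]]; [nra|].
  set (s := sqrt (1 - 2 * a)).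
  assert (hs : 0 < s) by (apply sqrt_lt_R0; lra).
  assert (hss : s * s = 1 - 2 * a) by (apply sqrt_sqrt; lra).
  assert (hnorm : sqrt (- lor S S) = sqrt 3 * s).
  { unfold S; rewrite (lor_triple_sum P0 P1 Q2 a n0 n1 nQ eq_refl h0Q h1Q).
    unfold s; rewrite <- sqrt_mult by lra; f_equal; ring. }
  assert (hsign : lam = s \/ lam = - s) by (apply Rsqr_eq; unfold Rsqr; lra).
  exists (lam / s); split.
  - destruct hsign as [-> | ->]; [left | right]; field; lra.
  - unfold R2; rewrite hnorm.
    apply (centroid_of_apex_normal _ _ _ _ a); try lra.
    + apply Rgt_not_eq, sqrt_lt_R0; lra.
    + exact hu.
Qed.
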